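(* Let $c\geq 1$ be a real number and let $G$ be a finite graph with growth $f_G(r)\leq cr$ for every positive integer $r$. Then $G$ does not contain the $\lceil 2c\rceil\times\lceil 2c\rceil$ grid as a minor.
   Context: The growth of a finite graph $G$ is the function $f_G\colon\mathbb{N}\to\mathbb{N}$ where $f_G(r)$ is the maximum of $|V(H)|$ over all subgraphs $H$ of $G$ of radius at most $r$. For $n\in\mathbb{N}$, the $n\times n$ grid is the graph with vertex set $\{(v_1,v_2): v_1,v_2\in\{1,\dots,n\}\}$ where $(v_1,v_2)$ and $(u_1,u_2)$ are adjacent iff either $v_1=u_1$ and $|v_2-u_2|=1$, or $v_2=u_2$ and $|v_1-u_1|=1$. A graph $H$ is a minor of $G$ if $H$ is isomorphic to a graph obtained from a subgraph of $G$ by contracting edges. *)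

From HB Require Import structures.
From mathcomp Require Import all_boot all_order all_algebra.
From mathcomp Require Import reals.
Set Implicit Arguments. Unset Strict Implicit. Unset Printing Implicit Defensive.
Import Order.TTheory GRing.Theory Num.Theory.

Definition simple_graph (T : finType) (e : rel T) : Prop :=
  symmetric e /\ irreflexive e.

Definition graph_on (T : finType) (S : {set T}) (F : rel T) : Prop :=
  symmetric F /\ irreflexive F /\ (forall u v, F u v -> (u \in S) && (v \in S)).

Definition is_subgraph (T : finType) (e : rel T) (S : {set T}) (F : rel T) : Prop :=
  graph_on S F /\ (forall u v, F u v -> e u v).

Definition radius_le (T : finType) (S : {set T}) (F : rel T) (r : nat) : Prop :=
  exists2 v, v \in S &
    forall u, u \in S -> exists p : seq T, [/\ path F v p, last v p = u & size p <= r]%N.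

(* f_G(r) <= b, where f_G(r) is the maximum of |V(H)| over all subgraphs H of G
   of radius at most r (unfolded: every such subgraph has at most b vertices). *)
Definition growth_le (R : realType) (T : finType) (e : rel T) (r : nat) (b : R) : Prop :=
  forall (S : {set T}) (F : rel T), is_subgraph e S F -> radius_le S F r ->
    (#|S|%:R <= b)%R.

Definition contract_rel (T : finType) (S : {set T}) (F : rel T) (x y : T) : rel T :=
  fun u v => [&& u \in S :\ y, v \in S :\ y, u != v &
                 [|| F u v, (u == x) && F y v | (v == x) && F u y]].

Inductive contracts_to (T : finType) : {set T} -> rel T -> {set T} -> rel T -> Prop :=
  | contracts_refl (S : {set T}) (F : rel T) : contracts_to S F S F
  | contracts_step (S : {set T}) (F : rel T) (x y : T) (S' : {set T}) (F' : rel T) :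
      F x y -> contracts_to (S :\ y) (contract_rel S F x y) S' F' ->
      contracts_to S F S' F'.

Definition iso_to (V T : finType) (h : rel V) (S : {set T}) (F : rel T) : Prop :=
  exists f : V -> T, [/\ injective f, f @: [set: V] = S &
                        forall a b, h a b = F (f a) (f b)].

Definition is_minor (V T : finType) (h : rel V) (e : rel T) : Prop :=
  exists (S : {set T}) (F : rel T) (S' : {set T}) (F' : rel T),
    [/\ is_subgraph e S F, contracts_to S F S' F' & iso_to h S' F'].

Definition grid_adj (n : nat) : rel ('I_n * 'I_n) :=
  fun v u =>
    ((v.1 == u.1) && ((v.2.+1 == u.2 :> nat) || (u.2.+1 == v.2 :> nat))) ||
    ((v.2 == u.2) && ((v.1.+1 == u.1 :> nat) || (u.1.+1 == v.1 :> nat))).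

From HB Require Import structures.
From mathcomp Require Import all_boot all_order all_algebra.
From mathcomp Require Import reals zify lra.
Import Order.TTheory GRing.Theory Num.Theory.
Set Implicit Arguments. Unset Strict Implicit. Unset Printing Implicit Defensive.

(* Let n = ceil(2c) and fix a model of the n x n grid in G.  The branch sets of
   a row (resp. column) of the grid form a connected vertex set of G; rows are
   pairwise disjoint, columns are pairwise disjoint, and every row meets every
   column.  Let X be a smallest of these 2n sets, say a row, with p >= 2
   vertices.  Every vertex of X lies within distance p - 1 of a fixed v in X,
   and each of the n columns, being connected with at least p vertices,
   contains a ball of radius p - 1 with at least p vertices around a vertex of X.  So X
   together with these n disjoint balls has radius at most 2(p - 1) around v
   and at least np >= 2cp vertices, whereas the growth bound allows at most
   2c(p - 1). *)

Section InducedSubgraphs.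
Variable T : finType.
Implicit Types (e F : rel T) (A B C : {set T}).

Definition induced e A : rel T := fun x y => [&& e x y, x \in A & y \in A].

Definition connected_in e A : Prop := {in A &, forall x y, connect (induced e A) x y}.

Definition dist_le F (v u : T) (k : nat) : Prop :=
  exists p : seq T, [/\ path F v p, last v p = u & size p <= k].

Lemma induced_sub e F A B : subrel e F -> A \subset B -> subrel (induced e A) (induced F B).
Proof.
move=> eF AB x y /and3P[exy xA yA].
by rewrite /induced (eF _ _ exy) (subsetP AB _ xA) (subsetP AB _ yA).
Qed.

Lemma induced_subset e A B : A \subset B -> subrel (induced e A) (induced e B).
Proof. exact: induced_sub. Qed.

Lemma connect_induced_sub e F A B x y :
  subrel e F -> A \subset B -> connect (induced e A) x y -> connect (induced F B) x y.
Proof. by move=> eF AB; apply: connect_sub => u w /(induced_sub eF AB)/connect1. Qed.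

Lemma connected_in_sub e F A : subrel e F -> connected_in e A -> connected_in F A.
Proof. by move=> eF connA x y xA yA; apply: connect_induced_sub (connA x y xA yA). Qed.

Lemma induced_sym e A : symmetric e -> symmetric (induced e A).
Proof. by move=> esym x y; rewrite /induced esym [(x \in A) && _]andbC. Qed.

Lemma induced_is_subgraph e A : symmetric e -> irreflexive e -> is_subgraph e A (induced e A).
Proof.
move=> esym eirr; split; last by move=> x y /and3P[].
split; first exact: induced_sym.
by split=> [x|x y /and3P[_ -> ->]]; rewrite /induced ?eirr.
Qed.

Lemma connected_in_rooted e A r :
  symmetric e -> {in A, forall x, connect (induced e A) r x} -> connected_in e A.
Proof.
move=> esym root x y xA yA; have csym := sym_connect_sym (induced_sym A esym).
by apply: (connect_trans _ (root y yA)); rewrite csym root.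
Qed.

Lemma connect_closed_in F (P : {pred T}) x y :
  (forall u w, F u w -> u \in P -> w \in P) -> connect F x y -> x \in P -> y \in P.
Proof.
move=> clP /connectP[p Fp ->]; elim: p x Fp => //= z p IHp x /andP[Fxz Fp] xP.
exact: IHp Fp (clP _ _ Fxz xP).
Qed.

Lemma dist_le_sub F F' v u k : subrel F F' -> dist_le F v u k -> dist_le F' v u k.
Proof. by move=> FF' [p [Fp pu pk]]; exists p; split=> //; apply: sub_path Fp. Qed.

Lemma dist_leW F v u k k' : k <= k' -> dist_le F v u k -> dist_le F v u k'.
Proof. by move=> kk' [p [Fp pu pk]]; exists p; split=> //; apply: leq_trans kk'. Qed.

Lemma dist_le_trans F v w u k1 k2 :
  dist_le F v w k1 -> dist_le F w u k2 -> dist_le F v u (k1 + k2).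
Proof.
move=> [p [Fp pw pk]] [q [Fq qu qk]]; exists (p ++ q).
by rewrite cat_path last_cat size_cat pw Fp Fq qu leq_add.
Qed.

Lemma card_bigcup_disjoint (I : finType) (Y : I -> {set T}) :
  (forall i j, i != j -> [disjoint Y i & Y j]) -> #|\bigcup_i Y i| = \sum_i #|Y i|.
Proof.
move=> disY; have : uniq (index_enum I) by exact: index_enum_uniq.
elim: (index_enum I) => [|i s IH] /=; first by rewrite !big_nil cards0.
case/andP=> i_s /IH {}IH; rewrite !big_cons -IH.
apply/eqP; rewrite (leq_card_setU _ _).2 -setI_eq0 big_seq.
apply: (big_ind (fun B => Y i :&: B == set0)) => [|B C|j js].
- by rewrite setI0.
- by rewrite setIUr => /eqP-> /eqP->; rewrite setU0.
- by rewrite setI_eq0 disY //; apply: contraNneq i_s => ->.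
Qed.

Lemma card_gt1_meet_disjoint A B C :
  ~~ [disjoint A & B] -> ~~ [disjoint A & C] -> [disjoint B & C] -> 1 < #|A|.
Proof.
rewrite -2!setI_eq0 => /set0Pn[x] /setIP[xA xB] /set0Pn[y] /setIP[yA yC] BC.
apply/card_gt1P; exists x, y; split=> //.
by apply: contraTneq yC => <-; rewrite (disjointFr BC xB).
Qed.

End InducedSubgraphs.

Section Balls.
Variables (T : finType) (e : rel T).
Implicit Types (A : {set T}) (v w : T).

Fixpoint ball A w k : {set T} :=
  if k is k'.+1 then ball A w k' :|: [set u in A | [exists x in ball A w k', e x u]]
  else [set w].

Lemma ball_center A w k : w \in ball A w k.
Proof. by elim: k => [|k IHk] /=; rewrite ?inE ?IHk ?eqxx. Qed.

Lemma ball_subS A w k : ball A w k \subset ball A w k.+1.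
Proof. exact: subsetUl. Qed.

Lemma ball_sub A w k : w \in A -> ball A w k \subset A.
Proof.
move=> wA; elim: k => [|k IHk] /=; first by rewrite sub1set.
by rewrite subUset IHk; apply/subsetP => u /setIdP[].
Qed.

Lemma ball_dist A w k u : u \in ball A w k -> dist_le (induced e (ball A w k)) w u k.
Proof.
elim: k u => [|k IHk] u /=; first by rewrite inE => /eqP->; exists [::].
have sub_k : subrel (induced e (ball A w k)) (induced e (ball A w k.+1)).
  exact: induced_subset (ball_subS A w k).
case/setUP => [/IHk dist_u | /setIdP[uA /existsP[x /andP[xk exu]]]].
  exact: dist_leW (leqnSn k) (dist_le_sub sub_k dist_u).
rewrite -addn1; apply: dist_le_trans (dist_le_sub sub_k (IHk x xk)) _.
exists [:: u]; split=> //=; rewrite andbT /induced exu !inE xk /=.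
by rewrite uA /=; apply/orP; right; apply/existsP; exists x; rewrite xk.
Qed.

Lemma ball_card A w k : w \in A -> connected_in e A -> minn #|A| k.+1 <= #|ball A w k|.
Proof.
move=> wA connA; elim: k => [|k IHk]; first by rewrite cards1 geq_minr.
have [ball_stable | ball_grows] := eqVneq (ball A w k.+1) (ball A w k).
  suff /subset_leq_card : A \subset ball A w k.
    by rewrite -ball_stable; apply: leq_trans; apply: geq_minl.
  apply/subsetP => u uA; apply: connect_closed_in (connA w u wA uA) (ball_center A w k).
  move=> x y /and3P[exy _ yA] xk; rewrite -ball_stable !inE yA /=.
  by apply/orP; right; apply/existsP; exists x; rewrite xk.
have /proper_card : ball A w k \proper ball A w k.+1.
  by rewrite properEneq ball_subS eq_sym ball_grows.
by move: IHk; lia.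
Qed.

Lemma connected_dist A v u :
  connected_in e A -> v \in A -> u \in A -> dist_le (induced e A) v u #|A|.-1.
Proof.
move=> connA vA uA; have ballA : ball A v #|A|.-1 = A.
  apply/eqP; rewrite eqEcard ball_sub //=.
  have := ball_card #|A|.-1 vA connA; rewrite prednK ?minnn //.
  by apply/card_gt0P; exists v.
by move: (@ball_dist A v #|A|.-1 u); rewrite ballA; apply.
Qed.

End Balls.

Lemma comb_subgraph (T : finType) (e : rel T) n (X : {set T}) (Y : 'I_n -> {set T}) v :
  v \in X -> connected_in e X -> (forall j, connected_in e (Y j)) ->
  (forall j j', j != j' -> [disjoint Y j & Y j']) ->
  (forall j, ~~ [disjoint X & Y j]) -> (forall j, #|X| <= #|Y j|) ->
  exists2 S, radius_le S (induced e S) (#|X|.-1.*2) & n * #|X| <= #|S|.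
Proof.
move=> vX connX connY disY meetXY leXY.
have X_gt0 : 0 < #|X| by apply/card_gt0P; exists v.
have /fin_all_exists[w wXY] : forall j, exists w, w \in X :&: Y j.
  by move=> j; apply/set0Pn; rewrite setI_eq0.
have wX j : w j \in X by have /setIP[] := wXY j.
have wY j : w j \in Y j by have /setIP[] := wXY j.
pose B j := ball e (Y j) (w j) #|X|.-1.
have BY j : B j \subset Y j by apply: ball_sub.
have cardB j : #|X| <= #|B j|.
  by have := ball_card #|X|.-1 (wY j) (connY j); rewrite prednK // (minn_idPr (leXY j)).
pose S := X :|: \bigcup_j B j.
have BS j : B j \subset S by apply: subset_trans (subsetUr _ _); apply: bigcup_sup.
have distX u : u \in X -> dist_le (induced e S) v u #|X|.-1.
  by move=> uX; apply: dist_le_sub (connected_dist connX vX uX); apply/induced_subset/subsetUl.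
exists S.
  exists v => [|u /setUP[uX | /bigcupP[j _ uB]]]; first by rewrite inE vX.
    by rewrite -addnn; apply: dist_leW (leq_addr _ _) (distX u uX).
  rewrite -addnn; apply: dist_le_trans (distX _ (wX j)) _.
  exact: dist_le_sub (induced_subset (BS j)) (ball_dist uB).
have disB j j' : j != j' -> [disjoint B j & B j'].
  by move/disY; apply: disjointW.
rewrite -[n]card_ord -sum_nat_const; apply: leq_trans (subset_leq_card (subsetUr X _)).
by rewrite card_bigcup_disjoint //; apply: leq_sum.
Qed.

Section BranchMaps.
Variable T : finType.
Implicit Types (S Z : {set T}) (F : rel T) (b : T -> T).

(* b sends each vertex of S to the vertex of S' it is contracted into, so that
   S :&: b @^-1: [set z] is the branch set of z. *)
Definition branch_map S F S' F' b : Prop :=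
  [/\ S' \subset S, {in S', forall z, b z = z},
      {in S, forall u, connect (induced F (S :&: b @^-1: [set b u])) (b u) u} &
      forall z z', F' z z' ->
        exists u u', [/\ u \in S, u' \in S, b u = z, b u' = z' & F u u']].

Definition merge_into (x y u : T) : T := if u == y then x else u.

Lemma contract_graph_on S F x y : graph_on S F -> graph_on (S :\ y) (contract_rel S F x y).
Proof.
move=> [Fsym [Firr _]]; split; [|split].
- move=> u v; rewrite /contract_rel eq_sym (Fsym v u) (Fsym y u) (Fsym v y).
  by case: (u \in _); case: (v \in _); case: (v == u); case: (F u v);
     case: (u == x); case: (v == x); case: (F y v); case: (F u y).
- by move=> u; rewrite /contract_rel eqxx !andbF.
- by move=> u v /and3P[-> -> _].
Qed.

Lemma branch_map_id S F : graph_on S F -> branch_map S F S F id.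
Proof.
move=> [_ [_ Fsupp]]; split=> [|//|u _|z z' Fzz']; [exact: subxx | exact: connect0 |].
by have /andP[zS z'S] := Fsupp _ _ Fzz'; exists z, z'.
Qed.

Section ContractStep.
Variables (S : {set T}) (F : rel T) (x y : T) (b : T -> T).
Hypotheses (graphF : graph_on S F) (Fxy : F x y).
Let b' := b \o merge_into x y.

Let xS : x \in S. Proof. by case: graphF => _ [_ /(_ x y Fxy)/andP[]]. Qed.
Let yS : y \in S. Proof. by case: graphF => _ [_ /(_ x y Fxy)/andP[]]. Qed.
Let x_neq_y : x != y.
Proof. by apply: contraTneq Fxy => ->; case: graphF => _ [-> _]. Qed.
Let b'E u : u != y -> b' u = b u.
Proof. by rewrite /b' /= /merge_into => /negbTE->. Qed.
Let b'y : b' y = b x.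
Proof. by rewrite /b' /= /merge_into eqxx. Qed.

(* A contracted edge at x is either an edge of F or a path of length two through y. *)
Lemma connect_contract_lift z u u' :
  connect (induced (contract_rel S F x y) ((S :\ y) :&: b @^-1: [set z])) u u' ->
  connect (induced F (S :&: b' @^-1: [set z])) u u'.
Proof.
have [Fsym _] := graphF.
apply: connect_sub => v v' /and3P[].
rewrite /contract_rel !inE => /and4P[/andP[vy vS] /andP[v'y v'S] _ Fvv'] /andP[_ bv] /andP[_ bv'].
have inP w : w \in S -> w != y -> b w == z -> w \in S :&: b' @^-1: [set z].
  by move=> wS wy bw; rewrite !inE wS /= b'E.
have yP : b x == z -> y \in S :&: b' @^-1: [set z] by rewrite !inE yS /= b'y.
case/or3P: Fvv' => [Fvv' | /andP[/eqP vx Fyv'] | /andP[/eqP v'x Fvy]].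
- by apply: connect1; rewrite /induced Fvv' !inP.
- have bxz : b x == z by rewrite -vx.
  apply: (@connect_trans _ _ y); apply: connect1.
    by rewrite /induced vx Fxy yP ?inP // -vx.
  by rewrite /induced Fyv' yP ?inP.
- have bxz : b x == z by rewrite -v'x.
  apply: (@connect_trans _ _ y); apply: connect1.
    by rewrite /induced Fvy yP ?inP.
  by rewrite /induced v'x Fsym Fxy yP ?inP // -v'x.
Qed.

Lemma branch_map_contract S' F' :
  branch_map (S :\ y) (contract_rel S F x y) S' F' b -> branch_map S F S' F' b'.
Proof.
case=> S'S fixb connb liftb; split.
- exact: subset_trans S'S (subsetDl _ _).
- move=> z zS'; have := subsetP S'S _ zS'; rewrite !inE => /andP[zy _].
  by rewrite b'E // fixb.
- move=> u uS; have [-> | uy] := eqVneq u y.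
    rewrite b'y; apply: connect_trans (connect_contract_lift (connb x _)) _.
      by rewrite !inE x_neq_y xS.
    by apply: connect1; rewrite /induced Fxy !inE xS yS /= b'y b'E ?eqxx.
  by rewrite b'E //; apply/connect_contract_lift/connb; rewrite !inE uy.
- move=> z z' /liftb[u [u' [/setD1P[uy uS] /setD1P[u'y u'S] bu bu']]].
  rewrite /contract_rel !inE uy uS u'y u'S /= => /andP[_].
  case/or3P => [Fuu' | /andP[/eqP ux Fyu'] | /andP[/eqP u'x Fuy]].
  + by exists u, u'; rewrite !b'E.
  + by exists y, u'; rewrite yS u'S b'y -ux bu b'E.
  + by exists u, y; rewrite yS uS b'y -u'x bu' b'E.
Qed.

End ContractStep.

Lemma contracts_to_branch_map S F S' F' :
  contracts_to S F S' F' -> graph_on S F -> exists b, branch_map S F S' F' b.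
Proof.
elim=> {S F S' F'} [S F | S F x y S' F' Fxy _ IH] graphF.
  by exists id; apply: branch_map_id.
have [b bm] := IH (contract_graph_on x y graphF).
by exists (b \o merge_into x y); apply: branch_map_contract.
Qed.

Section BranchSets.
Variables (S S' : {set T}) (F F' : rel T) (b : T -> T).
Hypothesis bmap : branch_map S F S' F' b.

Lemma mem_branch_set Z z : z \in S' -> z \in Z -> z \in S :&: b @^-1: Z.
Proof.
by case: bmap => S'S fixb _ _ zS' zZ; rewrite !inE (subsetP S'S) //= fixb.
Qed.

Lemma disjoint_branch_sets Z Z' :
  [disjoint Z & Z'] -> [disjoint S :&: b @^-1: Z & S :&: b @^-1: Z'].
Proof.
move=> disZ; rewrite -setI_eq0; apply/eqP/setP => u; rewrite !inE.
by case: (b u \in Z) /idP => [bZ|]; rewrite ?(disjointFr disZ bZ) !andbF.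
Qed.

Lemma connected_branch_set Z z0 :
  symmetric F -> {in Z, forall z, connect (induced F' Z) z0 z} ->
  connected_in F (S :&: b @^-1: Z).
Proof.
case: bmap => _ _ connb liftb Fsym rootZ; set P := S :&: b @^-1: Z.
have csym := sym_connect_sym (induced_sym P Fsym).
have fibre u : u \in S -> b u \in Z -> connect (induced F P) (b u) u.
  move=> uS buZ; apply: connect_induced_sub (connb u uS) => //.
  by apply/subsetP => w; rewrite !inE => /andP[-> /eqP->].
apply: (@connected_in_rooted _ _ _ z0) => // u /setIP[uS]; rewrite inE => buZ.
apply: connect_trans (fibre u uS buZ); move: (rootZ _ buZ).
apply: connect_sub => z z' /and3P[/liftb[v [v' [vS v'S bv bv' Fvv']]] zZ z'Z].
rewrite -bv -bv' in zZ z'Z *; apply: connect_trans (fibre v vS zZ) _.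
apply: (@connect_trans _ _ v'); last by rewrite csym fibre.
by apply: connect1; rewrite /induced Fvv' !inE vS v'S zZ z'Z.
Qed.

End BranchSets.

End BranchMaps.

Lemma connect_chain (T : finType) (F : rel T) N (g : 'I_N.+1 -> T) :
  (forall k, k < N -> F (g (inord k)) (g (inord k.+1))) ->
  forall i, connect (induced F [set g i | i : 'I_N.+1]) (g ord0) (g i).
Proof.
move=> Fg i; suff chain k :
    k <= N -> connect (induced F [set g i | i : 'I_N.+1]) (g ord0) (g (inord k)).
  by rewrite -(inord_val i) chain // -ltnS.
elim: k => [|k IHk] le_kN.
  by rewrite (_ : inord 0 = ord0) //; apply: val_inj; rewrite /= inordK.
apply: connect_trans (IHk (ltnW le_kN)) (connect1 _).
by rewrite /induced Fg // !imset_f.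
Qed.

Section Crossings.
Variables (T : finType) (e : rel T).

Definition crossing n (Rw Cl : 'I_n -> {set T}) : Prop :=
  [/\ forall i, connected_in e (Rw i), forall j, connected_in e (Cl j),
      forall i i', i != i' -> [disjoint Rw i & Rw i'],
      forall j j', j != j' -> [disjoint Cl j & Cl j'] &
      forall i j, ~~ [disjoint Rw i & Cl j]].

Lemma crossing_sym n (Rw Cl : 'I_n -> {set T}) : crossing Rw Cl -> crossing Cl Rw.
Proof. by case=> ? ? ? ? meet; split=> // j i; rewrite disjoint_sym. Qed.

Lemma grid_minor_crossing n S F S' F' b (f : 'I_n * 'I_n -> T) :
  graph_on S F -> subrel F e -> branch_map S F S' F' b ->
  injective f -> f @: setT = S' -> (forall a a', grid_adj a a' = F' (f a) (f a')) ->
  crossing (fun i => S :&: b @^-1: [set f (i, j) | j : 'I_n])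
           (fun j => S :&: b @^-1: [set f (i, j) | i : 'I_n]).
Proof.
case: n f => [|m] f [Fsym _] Fe bmap finj fim fadj; first by split; case.
have line_conn (g : 'I_m.+1 -> 'I_m.+1 * 'I_m.+1) :
    (forall k, k < m -> grid_adj (g (inord k)) (g (inord k.+1))) ->
    connected_in e (S :&: b @^-1: [set f (g j) | j : 'I_m.+1]).
  move=> adj_g; apply: connected_in_sub Fe _.
  apply: (connected_branch_set bmap (z0 := f (g ord0))) => // _ /imsetP[j _ ->].
  by apply: (connect_chain (g := fun j => f (g j))) => k /adj_g; rewrite fadj.
have lines_disjoint (g g' : 'I_m.+1 -> 'I_m.+1 * 'I_m.+1) :
    (forall j j', g j != g' j') ->
    [disjoint [set f (g j) | j : 'I_m.+1] & [set f (g' j) | j : 'I_m.+1]].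
  move=> neq_gg'; rewrite -setI_eq0; apply/eqP/setP => u; rewrite !inE.
  apply/negbTE/andP => -[/imsetP[j _ ->] /imsetP[j' _ /finj/eqP]].
  by rewrite (negbTE (neq_gg' j j')).
have succ k : k < m -> (inord k : 'I_m.+1).+1 = (inord k.+1 : 'I_m.+1) :> nat.
  by move=> lt_km; rewrite !inordK //; lia.
split=> [i|j|i i' neq_i|j j' neq_j|i j].
- by apply: line_conn => k /succ; rewrite /grid_adj /= eqxx => ->; rewrite eqxx.
- by apply: line_conn => k /succ; rewrite /grid_adj /= eqxx => ->; rewrite eqxx orbT.
- by apply/disjoint_branch_sets/lines_disjoint => j j'; rewrite xpair_eqE (negbTE neq_i).
- by apply/disjoint_branch_sets/lines_disjoint => i i'; rewrite xpair_eqE (negbTE neq_j) andbF.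
- rewrite -setI_eq0; apply/set0Pn; exists (f (i, j)).
  by rewrite inE !(mem_branch_set bmap) ?imset_f // -fim imset_f.
Qed.

End Crossings.

Lemma comb_exceeds_growth (R : realType) (c : R) n p s :
  (1 <= c)%R -> (2 * c <= n%:R)%R -> 1 < p -> n * p <= s ->
  ~ (s%:R <= c * (p.-1.*2)%:R)%R.
Proof.
move=> c_ge1 n_ge2c p_gt1; rewrite -(ler_nat R) natrM => np_le_s.
have -> : (p.-1.*2 = p.*2 - 2)%N by lia.
rewrite natrB -?mul2n ?natrM; last by lia.
have p_ge2 : (2 <= p%:R :> R)%R by rewrite ler_nat.
have : (2 * c * p%:R <= n%:R * p%:R)%R by rewrite ler_wpM2r //; lra.
lra.
Qed.

Lemma no_crossing (R : realType) (c : R) (T : finType) (e : rel T) n (Rw Cl : 'I_n -> {set T}) :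
  (1 <= c)%R -> symmetric e -> irreflexive e ->
  (forall r : nat, 0 < r -> growth_le e r (c * r%:R)%R) ->
  (2 * c <= n%:R)%R -> ~ crossing e Rw Cl.
Proof.
move=> c_ge1 esym eirr growth n_ge2c.
have n_gt1 : 1 < n by rewrite -(ler_nat R); apply: le_trans n_ge2c; lra.
pose i0 : 'I_n := Ordinal (ltnW n_gt1); pose i1 : 'I_n := Ordinal n_gt1.
have i0_neq_i1 : i0 != i1 by [].
wlog [a [minR minC]] : Rw Cl /
    exists a, (forall i, #|Rw a| <= #|Rw i|) /\ (forall j, #|Rw a| <= #|Cl j|).
  move=> WLOG cross.
  have [a _ minR] := @arg_minnP _ i0 xpredT (fun i => #|Rw i|) isT.
  have [a' _ minC] := @arg_minnP _ i0 xpredT (fun j => #|Cl j|) isT.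
  have [le_aa' | lt_a'a] := leqP #|Rw a| #|Cl a'|.
    apply: (WLOG Rw Cl) cross; exists a; split=> [i | j]; first exact: minR.
    exact: leq_trans le_aa' (minC j isT).
  apply: (WLOG Cl Rw) (crossing_sym cross); exists a'; split=> [j | i]; first exact: minC.
  exact: leq_trans (ltnW lt_a'a) (minR i isT).
case=> connR connC _ disC meet.
have /set0Pn[v /setIP[vR _]] : Rw a :&: Cl i0 != set0 by rewrite setI_eq0 meet.
have p_gt1 : 1 < #|Rw a| := card_gt1_meet_disjoint (meet a i0) (meet a i1) (disC _ _ i0_neq_i1).
have [S radS cardS] := comb_subgraph vR (connR a) connC disC (meet a) minC.
have r_gt0 : 0 < #|Rw a|.-1.*2 by lia.
apply: (comb_exceeds_growth c_ge1 n_ge2c p_gt1 cardS).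
exact: growth _ r_gt0 S (induced e S) (induced_is_subgraph S esym eirr) radS.
Qed.

Unset Implicit Arguments.

Theorem theorem9 (R : realType) (c : R) (T : finType) (e : rel T) :
  (1 <= c)%R ->
  simple_graph e ->
  (forall r : nat, (0 < r)%N -> growth_le e r (c * r%:R)%R) ->
  ~ is_minor (@grid_adj `|Num.ceil (2 * c)%R|%N) e.
Proof.
move=> c_ge1 [esym eirr] growth [S [F [S' [F' [[graphF Fe] contract [f [finj fim fadj]]]]]]].
have [b bmap] := contracts_to_branch_map contract graphF.
apply: (no_crossing c_ge1 esym eirr growth _ (grid_minor_crossing graphF Fe bmap finj fim fadj)).
by rewrite natr_absz ger0_norm ?ceil_ge // ceil_ge0; lra.
Qed.
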